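(* Let $H$ be a strong symplectic Hilbert space with signature $(\infty,\infty)$ and let $W\subseteq H$ be a maximal positive-definite subspace which is not maximally completely positive-definite. Then $W\cap W^{\perp_s}=0$, and $W\oplus W^{\perp_s}$ is a proper dense subspace of $H$.
   Context: All Hilbert spaces are complex and separable. A strong symplectic structure on a Hilbert space $H$ is a continuous sesquilinear form $[\cdot,\cdot]$ (linear in the first, conjugate-linear in the second variable) with $[y,x]=-\overline{[x,y]}$, non-degenerate, and such that $x\mapsto[\cdot,x]$ maps $H$ onto its dual. For $L\subseteq H$, $L^{\perp_s}=\{x:[x,y]=0\ \forall y\in L\}$. A closed subspace $L\subseteq H$ is maximal positive-definite if $-i[x,x]>0$ for every $0\ne x\in L$ and $L$ is not properly contained in a subspace with the same property; it is maximally completely positive-definite if moreover there is $c_L>0$ with $-i[x,x]\ge c_L\|x\|^2$ for all $x\in L$. If $L$ is maximally completely positive-definite then $H=L\oplus L^{\perp_s}$ and $(n_+,n_-)=(\dim L,\dim L^{\perp_s})$ is independent of $L$; this is the signature of $H$. *)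

From HB Require Import structures.
From mathcomp Require Import all_boot all_order all_algebra.
From mathcomp Require Import reals.
From mathcomp Require Import complex.
Set Implicit Arguments. Unset Strict Implicit. Unset Printing Implicit Defensive.
Import Order.TTheory GRing.Theory Num.Theory.
Local Open Scope ring_scope.

(* R[i] is a numClosedFieldType; its order: 0 < z iff z is a positive real.
   'i is the imaginary unit, z^* complex conjugation (Num.conj). *)

Section Hilbert.
Variable R : realType.
Local Notation C := R[i].
Variable V : lmodType C.

Definition hnorm (ip : V -> V -> C) (x : V) : C := sqrtC (ip x x).

Definition is_hilbert (ip : V -> V -> C) : Prop :=
  [/\ (forall a x y z, ip (a *: x + y) z = a * ip x z + ip y z),
      (forall x y, ip y x = (ip x y)^*),
      (forall x, 0 <= ip x x /\ (ip x x = 0 -> x = 0)),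
      (forall u : nat -> V,
         (forall e : C, 0 < e -> exists N, forall m n, (N <= m)%N -> (N <= n)%N ->
             hnorm ip (u m - u n) < e) ->
         exists l, forall e : C, 0 < e -> exists N, forall n, (N <= n)%N ->
             hnorm ip (u n - l) < e)
    &
      exists d : nat -> V, forall x (e : C), 0 < e -> exists n, hnorm ip (x - d n) < e].

Definition cont_functional (ip : V -> V -> C) (f : V -> C) : Prop :=
  (forall a x y, f (a *: x + y) = a * f x + f y) /\
  exists M : C, 0 < M /\ forall x, `|f x| <= M * hnorm ip x.

Definition strong_symplectic (ip : V -> V -> C) (w : V -> V -> C) : Prop :=
  [/\ (forall a x y z, w (a *: x + y) z = a * w x z + w y z),
      (forall x y, w y x = - (w x y)^*),
      (exists M : C, 0 < M /\ forall x y, `|w x y| <= M * hnorm ip x * hnorm ip y),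
      (forall x, (forall y, w x y = 0) -> x = 0)
    & (forall f, cont_functional ip f -> exists x, forall y, f y = w y x)].

Definition sperp (w : V -> V -> C) (L : V -> Prop) : V -> Prop :=
  fun x => forall y, L y -> w x y = 0.

Definition is_subspace (L : V -> Prop) : Prop :=
  L 0 /\ forall a x y, L x -> L y -> L (a *: x + y).

Definition is_closed_subspace (ip : V -> V -> C) (L : V -> Prop) : Prop :=
  is_subspace L /\
  forall (u : nat -> V) l, (forall n, L (u n)) ->
    (forall e : C, 0 < e -> exists N, forall n, (N <= n)%N -> hnorm ip (u n - l) < e) ->
    L l.

Definition pos_def (w : V -> V -> C) (L : V -> Prop) : Prop :=
  forall x, L x -> x <> 0 -> 0 < - 'i * w x x.

Definition max_pos_def (ip w : V -> V -> C) (L : V -> Prop) : Prop :=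
  [/\ is_closed_subspace ip L, pos_def w L &
      forall M : V -> Prop, is_closed_subspace ip M -> pos_def w M ->
        (forall x, L x -> M x) -> forall x, M x -> L x].

Definition max_comp_pos_def (ip w : V -> V -> C) (L : V -> Prop) : Prop :=
  max_pos_def ip w L /\
  exists c : C, 0 < c /\ forall x, L x -> c * hnorm ip x ^+ 2 <= - 'i * w x x.

Definition inf_dim (L : V -> Prop) : Prop :=
  forall n : nat, exists v : 'I_n -> V, (forall i, L (v i)) /\
    forall c : 'I_n -> C, \sum_(i < n) c i *: v i = 0 -> forall i, c i = 0.

Definition signature_inf_inf (ip w : V -> V -> C) : Prop :=
  exists L, max_comp_pos_def ip w L /\ inf_dim L /\ inf_dim (sperp w L).

Definition dense (ip : V -> V -> C) (S : V -> Prop) : Prop :=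
  forall x (e : C), 0 < e -> exists y, S y /\ hnorm ip (x - y) < e.

Definition ssum (A B : V -> Prop) : V -> Prop :=
  fun z => exists x y, A x /\ B y /\ z = x + y.

End Hilbert.

(* W ∩ W^⊥s = 0 because -i[x,x] > 0 on W \ 0.  Strong symplecticity gives for every v a
   vector u(v) with ⟨z, v⟩ = [z, u(v)] for all z.  If v is orthogonal to W + W^⊥s, then
   u(v) lies in W^⊥s and in W^⊥s⊥s = W, so u(v) = 0 and v = 0: the sum is dense.  If
   W + W^⊥s were all of H, uniform boundedness would make u and the projection P onto W along
   W^⊥s bounded.  For x ∈ W the vector y = P u(x) ∈ W satisfies [x, y] = ‖x‖² and
   ‖y‖ ≤ C‖x‖, so Cauchy-Schwarz for the positive form -i[.,.] on W yields -i[x,x] ≥ c‖x‖²,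
   i.e. W would be maximally completely positive-definite. *)

From HB Require Import structures.
From mathcomp Require Import all_boot all_order all_algebra.
From mathcomp Require Import classical_sets reals complex.
From mathcomp Require Import ring lra.
From Stdlib Require Import Classical.
Set Implicit Arguments. Unset Strict Implicit. Unset Printing Implicit Defensive.
Import Order.TTheory GRing.Theory Num.Theory Normc.
Local Open Scope complex_scope.
Local Open Scope ring_scope.

Section ComplexModulus.
Variable R : realType.
Implicit Types (a b : R[i]) (r : R).

Lemma normr_normc a : `|a| = (normc a)%:C.
Proof. by []. Qed.

Lemma normc_ge0 a : 0 <= normc a.
Proof. by case: a => x y; exact: sqrtr_ge0. Qed.

Lemma normc_real r : normc r%:C = `|r|.
Proof. by rewrite /normc /= expr0n addr0 sqrtr_sqr. Qed.

Lemma normc_nat n : normc (n%:R : R[i]) = n%:R.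
Proof. by rewrite -(rmorph_nat (real_complex R)) normc_real normr_nat. Qed.

Lemma normc_i : normc ('i : R[i]) = 1.
Proof. by rewrite /normc /= expr0n expr1n add0r sqrtr1. Qed.

Lemma conjC_real r : (r%:C)^* = r%:C :> R[i].
Proof. by apply: conj_Creal; rewrite complex_real. Qed.

Lemma normc_divR a r : 0 < r -> normc (a / r%:C) = normc a / r.
Proof. by move=> r0; rewrite normcM -fmorphV normc_real ger0_norm // invr_ge0 ltW. Qed.

Lemma sqr_normc a : (normc a)%:C ^+ 2 = a * a^*.
Proof. exact: normCK. Qed.

Lemma ReD a b : complex.Re (a + b) = complex.Re a + complex.Re b.
Proof. by case: a; case: b. Qed.

Lemma ReN a : complex.Re (- a) = - complex.Re a.
Proof. by case: a. Qed.

Lemma Re_conj a : complex.Re a^* = complex.Re a.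
Proof. by case: a. Qed.

Lemma Re_realM r a : complex.Re (r%:C * a) = r * complex.Re a.
Proof. by case: a => x y /=; rewrite mul0r subr0. Qed.

Lemma Re_le_normc a : complex.Re a <= normc a.
Proof.
case: a => x y /=; apply: le_trans (ler_norm x) _.
by rewrite -sqrtr_sqr ler_sqrt ?lerDl ?sqr_ge0 // addr_ge0 ?sqr_ge0.
Qed.

Lemma ger0_ReE a : 0 <= a -> a = (complex.Re a)%:C.
Proof. by move=> /ger0_real /RRe_real. Qed.

Lemma Re_ge0 a : 0 <= a -> 0 <= complex.Re a.
Proof. by rewrite lecE => /andP[]. Qed.

Lemma Re_gt0 a : 0 < a -> 0 < complex.Re a.
Proof. by rewrite ltcE => /andP[]. Qed.

End ComplexModulus.

Section LinearFunctional.
Variables (R : realType) (V : lmodType R[i]) (g : V -> R[i]).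
Hypothesis g_lin : forall a x y, g (a *: x + y) = a * g x + g y.

Lemma lfunD x y : g (x + y) = g x + g y.
Proof. by rewrite -[x]scale1r g_lin mul1r scale1r. Qed.

Lemma lfun0 : g 0 = 0.
Proof. by apply: (addrI (g 0)); rewrite -lfunD addr0 [RHS]addr0. Qed.

Lemma lfunZ a x : g (a *: x) = a * g x.
Proof. by rewrite -[a *: x]addr0 g_lin lfun0 addr0. Qed.

Lemma lfunN x : g (- x) = - g x.
Proof. by rewrite -scaleN1r lfunZ mulN1r. Qed.

Lemma lfunB x y : g (x - y) = g x - g y.
Proof. by rewrite lfunD lfunN. Qed.

End LinearFunctional.

Section HermitianForm.
Variables (R : realType) (V : lmodType R[i]) (f : V -> V -> R[i]).
Hypothesis f_lin : forall a x y z, f (a *: x + y) z = a * f x z + f y z.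
Hypothesis f_herm : forall x y, f y x = (f x y)^*.

Let f_linl z a x y : f (a *: x + y) z = a * f x z + f y z := f_lin a x y z.

Lemma hermitian_cauchy_schwarz x y :
  (forall t, 0 <= f (x - t *: y) (x - t *: y)) -> 0 < complex.Re (f y y) ->
  normc (f x y) ^+ 2 <= complex.Re (f x x) * complex.Re (f y y).
Proof.
move=> fpos b_gt0; set b := complex.Re (f y y); set c := f x y.
have fyy : f y y = b%:C by rewrite /b RRe_real // CrealE -f_herm.
have fxx : f x x = (complex.Re (f x x))%:C.
  by apply: ger0_ReE; have := fpos 0; rewrite scale0r subr0.
have fJ u v : (f u v)^* = f v u by rewrite [RHS]f_herm.
have fB u v z : f (u - v) z = f u z - f v z := lfunB (f_linl z) u v.
have fZ t u z : f (t *: u) z = t * f u z := lfunZ (f_linl z) t u.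
have expand t : f (x - t *: y) (x - t *: y) = f x x - t^* * c - t * (c^* - t^* * b%:C).
  rewrite fB fZ [f x (x - _)]f_herm [f y (x - _)]f_herm !fB !fZ !rmorphB !rmorphM /=.
  by rewrite !fJ fyy.
have b_neq0 : b%:C != 0 :> R[i] by rewrite -[0 : R[i]]/(0%:C) (inj_eq (@complexI _)) gt_eqF.
have := fpos (c / b%:C); rewrite expand.
have -> : f x x - (c / b%:C)^* * c - (c / b%:C) * (c^* - (c / b%:C)^* * b%:C)
   = (complex.Re (f x x) - normc c ^+ 2 / b)%:C.
  have conjb : (b%:C)^* = b%:C :> R[i] by rewrite -fyy fJ.
  by rewrite rmorphM fmorphV /= conjb rmorphB rmorphM fmorphV /= rmorphXn sqr_normc -fxx; field.
by rewrite -[0 : R[i]]/(0%:C) lecR subr_ge0 ler_pdivrMr.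
Qed.

End HermitianForm.

Section RealSequences.
Variable R : realType.
Implicit Types (u : nat -> R) (a e : R).

Definition vanishes u := forall e, 0 < e -> exists N, forall n, (N <= n)%N -> u n < e.

Lemma le0_of_vanishes a u : (forall n, a <= u n) -> vanishes u -> a <= 0.
Proof.
move=> a_le /(_ a) vu; rewrite leNgt; apply/negP => /vu[N /(_ N (leqnn N))].
by rewrite ltNge a_le.
Qed.

Lemma vanishesD u v : vanishes u -> vanishes v -> vanishes (fun n => u n + v n).
Proof.
move=> vu vv e e_gt0; have e2_gt0 : 0 < e / 2 by rewrite divr_gt0.
have [[M uM] [N vN]] := (vu _ e2_gt0, vv _ e2_gt0).
exists (maxn M N) => n; rewrite geq_max => /andP[/uM ? /vN ?]; lra.
Qed.

Lemma ler_of_sqr_le_mul a c : 0 <= a -> 0 <= c -> a ^+ 2 <= a * c -> a <= c.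
Proof. by move=> a_ge0 c_ge0 le_ac; nra. Qed.

Definition invpow3 (n : nat) : R := 3^-1 ^+ n.

Lemma invpow3_gt0 n : 0 < invpow3 n.
Proof. by rewrite exprn_gt0 // invr_gt0. Qed.

Lemma invpow3S n : invpow3 n.+1 = invpow3 n / 3.
Proof. by rewrite /invpow3 exprSr. Qed.

Lemma invpow3D m n : invpow3 (m + n) = invpow3 m * invpow3 n.
Proof. exact: exprD. Qed.

Lemma invpow3_le1 n : invpow3 n <= 1.
Proof. by rewrite exprn_ile1 // ?invr_ge0 // invf_le1 // ler1n. Qed.

Lemma mulr_invpow3 n : 3 ^+ n * invpow3 n = 1.
Proof. by rewrite /invpow3 -exprMn mulfV ?expr1n // pnatr_eq0. Qed.

Lemma vanishes_invpow3 : vanishes invpow3.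
Proof.
move=> e e_gt0; have inve_ge0 : 0 <= e^-1 by rewrite invr_ge0 ltW.
exists (Num.bound e^-1) => n le_bn.
have n1_gt0 : 0 < n.+1%:R :> R by rewrite ltr0n.
apply: (@le_lt_trans _ _ n.+1%:R^-1).
  by rewrite /invpow3 exprVn lef_pV2 ?posrE ?exprn_gt0 // -natrX ler_nat ltn_expl.
rewrite -ltf_pV2 ?posrE ?invr_gt0 // invrK; apply: lt_le_trans (archi_boundP inve_ge0) _.
by rewrite ler_nat (leq_trans le_bn).
Qed.

End RealSequences.

Section Subspace.
Variables (R : realType) (V : lmodType R[i]) (S : V -> Prop).
Hypothesis S_sub : is_subspace S.

Lemma subspaceD x y : S x -> S y -> S (x + y).
Proof. by case: S_sub => _ S_lin Sx Sy; rewrite -[x]scale1r; apply: S_lin. Qed.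

Lemma subspaceZ a x : S x -> S (a *: x).
Proof. by case: S_sub => S0 S_lin Sx; rewrite -[_ *: _]addr0; apply: S_lin. Qed.

Lemma subspaceB x y : S x -> S y -> S (x - y).
Proof. by move=> Sx Sy; rewrite -scaleN1r; apply: subspaceD => //; apply: subspaceZ. Qed.

End Subspace.

Section InnerProduct.
Variables (R : realType) (V : lmodType R[i]) (ip : V -> V -> R[i]).

Definition rnorm2 (x : V) : R := complex.Re (ip x x).
Definition rnorm (x : V) : R := Num.sqrt (rnorm2 x).

Definition converges_to (u : nat -> V) (l : V) := vanishes (fun n => rnorm (u n - l)).

Definition cauchy_seq (u : nat -> V) := forall e : R, 0 < e ->
  exists N, forall m n, (N <= m)%N -> (N <= n)%N -> rnorm (u m - u n) < e.

Hypothesis ip_lin : forall a x y z, ip (a *: x + y) z = a * ip x z + ip y z.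
Hypothesis ip_sym : forall x y, ip y x = (ip x y)^*.
Hypothesis ip_pos : forall x, 0 <= ip x x /\ (ip x x = 0 -> x = 0).

Let ip_linl z a x y : ip (a *: x + y) z = a * ip x z + ip y z := ip_lin a x y z.

Lemma ipxx x : ip x x = (rnorm2 x)%:C.
Proof. exact: ger0_ReE (ip_pos x).1. Qed.

Lemma rnorm2_ge0 x : 0 <= rnorm2 x.
Proof. by rewrite -lecR -ipxx; exact: (ip_pos x).1. Qed.

Lemma rnorm_ge0 x : 0 <= rnorm x.
Proof. exact: sqrtr_ge0. Qed.

Lemma sqr_rnorm x : rnorm x ^+ 2 = rnorm2 x.
Proof. by rewrite sqr_sqrtr // rnorm2_ge0. Qed.

Lemma rnorm_eq0 x : rnorm x = 0 -> x = 0.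
Proof. by move=> x0; apply: (ip_pos x).2; rewrite ipxx -sqr_rnorm x0 expr0n. Qed.

Lemma rnorm_gt0 x : x != 0 -> 0 < rnorm x.
Proof. by move=> /eqP x0; rewrite lt_neqAle rnorm_ge0 andbT eq_sym; apply/eqP => /rnorm_eq0. Qed.

Lemma hnormE x : hnorm ip x = (rnorm x)%:C.
Proof. by rewrite /hnorm ipxx -sqr_rnorm rmorphXn /= sqrCK // lecR rnorm_ge0. Qed.

Lemma ipDr z x y : ip z (x + y) = ip z x + ip z y.
Proof. by rewrite ip_sym (lfunD (ip_linl z)) rmorphD /= -!ip_sym. Qed.

Lemma ipZr z a x : ip z (a *: x) = a^* * ip z x.
Proof. by rewrite ip_sym (lfunZ (ip_linl z)) rmorphM /= -ip_sym. Qed.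

Lemma ipNr z x : ip z (- x) = - ip z x.
Proof. by rewrite -scaleN1r ipZr rmorphN1 mulN1r. Qed.

Lemma ip0r z : ip z 0 = 0.
Proof. by rewrite ip_sym (lfun0 (ip_linl z)) conjC0. Qed.

Lemma ip_cauchy_schwarz x y : normc (ip x y) <= rnorm x * rnorm y.
Proof.
have [->|y0] := eqVneq y 0; first by rewrite ip0r normc0 mulr_ge0 ?rnorm_ge0.
rewrite -ler_sqr ?nnegrE ?normc_ge0 ?mulr_ge0 ?rnorm_ge0 // exprMn !sqr_rnorm.
apply: hermitian_cauchy_schwarz => // [t|]; first exact: (ip_pos _).1.
by rewrite -/(rnorm2 y) -sqr_rnorm exprn_gt0 // rnorm_gt0.
Qed.

Lemma rnorm2Z a x : rnorm2 (a *: x) = normc a ^+ 2 * rnorm2 x.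
Proof.
apply: (@complexI R); rewrite -ipxx (lfunZ (ip_linl _)) ipZr mulrA.
by rewrite -sqr_normc ipxx -rmorphXn -rmorphM.
Qed.

Lemma rnormZ a x : rnorm (a *: x) = normc a * rnorm x.
Proof. by rewrite /rnorm rnorm2Z sqrtrM ?sqr_ge0 // sqrtr_sqr ger0_norm ?normc_ge0. Qed.

Lemma rnormN x : rnorm (- x) = rnorm x.
Proof. by rewrite -scaleN1r rnormZ normcN normc1 mul1r. Qed.

Lemma rnorm_distC x y : rnorm (x - y) = rnorm (y - x).
Proof. by rewrite -rnormN opprB. Qed.

Lemma rnorm0 : rnorm 0 = 0.
Proof. by rewrite -(scale0r (0 : V)) rnormZ normc0 mul0r. Qed.

Lemma rnorm2D x y : rnorm2 (x + y) = rnorm2 x + rnorm2 y + 2 * complex.Re (ip x y).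
Proof.
rewrite /rnorm2 (lfunD (ip_linl _)) !ipDr (ip_sym x y) !ReD Re_conj.
by rewrite mulr2n mulrDl mul1r; lra.
Qed.

Lemma ler_rnormD x y : rnorm (x + y) <= rnorm x + rnorm y.
Proof.
rewrite -ler_sqr ?nnegrE ?addr_ge0 ?rnorm_ge0 // sqr_rnorm rnorm2D sqrrD !sqr_rnorm.
have := le_trans (Re_le_normc _) (ip_cauchy_schwarz x y); rewrite mulr2n; lra.
Qed.

Lemma parallelogram x y : rnorm2 (x + y) + rnorm2 (x - y) = 2 * rnorm2 x + 2 * rnorm2 y.
Proof. by rewrite !rnorm2D -!sqr_rnorm rnormN ipNr ReN; lra. Qed.

Lemma closed_subspace_limit S u l : is_closed_subspace ip S ->
  (forall n, S (u n)) -> converges_to u l -> S l.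
Proof.
move=> [_ S_closed] Su ul; apply: S_closed Su _ => e e_gt0.
have [N uN] := ul _ (Re_gt0 e_gt0).
by exists N => n le_Nn; rewrite hnormE (ger0_ReE (ltW e_gt0)) ltcR uN.
Qed.

Lemma closed_dist_gt0 S y : is_closed_subspace ip S -> ~ S y ->
  exists2 eps : R, 0 < eps & forall s, S s -> eps <= rnorm (y - s).
Proof.
move=> S_closed Sy; apply: NNPP => no_eps; apply: Sy.
have near_y n : exists s, S s /\ rnorm (s - y) < invpow3 R n.
  apply: NNPP => no_s; apply: no_eps; exists (invpow3 R n); first exact: invpow3_gt0.
  move=> s Ss; rewrite leNgt rnorm_distC; apply/negP => lt_sy.
  by apply: no_s; exists s.
have [u uP] := boolp.choice near_y.
apply: closed_subspace_limit S_closed (fun n => (uP n).1) _ => e /(vanishes_invpow3 (R := R))[N NP].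
by exists N => n le_Nn; apply: lt_trans (uP n).2 (NP n le_Nn).
Qed.

Lemma ip_limit_eq0 u l v : converges_to u l -> (forall n, ip (u n) v = 0) -> ip l v = 0.
Proof.
move=> ul uv0; apply: eq0_normc; apply/eqP; rewrite eq_le normc_ge0 andbT.
have v1_gt0 : 0 < rnorm v + 1 by have := rnorm_ge0 v; lra.
apply: (@le0_of_vanishes _ _ (fun n => rnorm (u n - l) * (rnorm v + 1))) => [n|e e_gt0].
  have -> : ip l v = - ip (u n - l) v by rewrite (lfunB (ip_linl _)) uv0 sub0r opprK.
  rewrite normcN; apply: le_trans (ip_cauchy_schwarz _ _) _.
  by rewrite ler_wpM2l ?rnorm_ge0 //; lra.
have [N NP] := ul _ (divr_gt0 e_gt0 v1_gt0).
by exists N => n /NP; rewrite ltr_pdivlMr.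
Qed.

Lemma orthogonal_of_min_norm v s :
  (forall t, rnorm v <= rnorm (v - t *: s)) -> ip s v = 0.
Proof.
move=> v_min; set c := ip v s.
have s2_ge0 := rnorm2_ge0 s.
pose r := (rnorm2 s + 1)^-1.
have r_gt0 : 0 < r by rewrite invr_gt0; lra.
have rs_lt1 : r * rnorm2 s < 1 by rewrite mulrC ltr_pdivrMr ?mul1r; lra.
have expand : rnorm2 (v - (r%:C * c) *: s)
    = rnorm2 v + r ^+ 2 * normc c ^+ 2 * rnorm2 s - 2 * (r * normc c ^+ 2).
  rewrite rnorm2D -!sqr_rnorm rnormN !sqr_rnorm rnorm2Z ipNr ipZr rmorphM /= conjC_real.
  rewrite -/c -mulrA ReN Re_realM.
  by rewrite [c^* * c]mulrC -sqr_normc -rmorphXn normcM normc_real ger0_norm ?(ltW r_gt0) /=; ring.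
suff /eq0_normc c0 : normc c = 0 by rewrite ip_sym -/c c0 conjC0.
have := v_min (r%:C * c); rewrite -ler_sqr ?nnegrE ?rnorm_ge0 // !sqr_rnorm expand.
move: (normc c) (normc_ge0 c) => X X_ge0 le_X.
apply/eqP; rewrite eq_le X_ge0 andbT leNgt; apply/negP => X_gt0.
have : 0 <= r * X ^+ 2 * (r * rnorm2 s - 2) by nra.
by rewrite pmulr_rge0 ?mulr_gt0 ?exprn_gt0 //; lra.
Qed.

Lemma minimizing_seq S x : S 0 ->
  exists d (s : nat -> V), [/\ forall t, S t -> d <= rnorm (x - t),
    forall n, S (s n) & forall n, rnorm (x - s n) < d + invpow3 R n].
Proof.
move=> S0; pose E : set R := fun r => exists2 t, S t & r = rnorm (x - t).
have E_lb : has_lbound E by exists 0 => _ [t _ ->]; exact: rnorm_ge0.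
have E_inf : has_inf E by split => //; exists (rnorm (x - 0)); exists 0.
have near_inf n : exists t, S t /\ rnorm (x - t) < inf E + invpow3 R n.
  by have [_ [t St ->] lt_t] := inf_adherent (invpow3_gt0 R n) E_inf; exists t.
have [s sP] := boolp.choice near_inf.
exists (inf E), s; split=> [t St | n | n]; [| exact: (sP n).1 | exact: (sP n).2].
by apply: ge_inf E_lb _ _; exists t.
Qed.

Lemma minimizing_cauchy S x d s : is_subspace S -> 0 <= d ->
  (forall t, S t -> d <= rnorm (x - t)) -> (forall n, S (s n)) ->
  (forall n, rnorm (x - s n) < d + invpow3 R n) -> cauchy_seq s.
Proof.
move=> S_sub d_ge0 d_lb Ss s_near e e_gt0.
(* Parallelogram law: |s m - s n|^2 <= 2 (d + rn)^2 + 2 (d + rm)^2 - 4 d^2 <= K (rn + rm) / 2. *)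
pose K := 8 * d + 4; have K_gt0 : 0 < K by rewrite /K; lra.
have [N NP] := vanishes_invpow3 (divr_gt0 (exprn_gt0 2 e_gt0) K_gt0).
exists N => m n le_Nm le_Nn.
have := NP m le_Nm; have := NP n le_Nn; rewrite !ltr_pdivlMr // /K.
have := s_near m; have := s_near n; have := invpow3_gt0 R m; have := invpow3_gt0 R n.
have := invpow3_le1 R m; have := invpow3_le1 R n.
move: (invpow3 R m) (invpow3 R n) => rm rn rn_le1 rm_le1 rn_gt0 rm_gt0 near_n near_m Kn Km.
pose mid := (2^-1 : R[i]) *: (s m + s n).
have Smid : S mid by apply: subspaceZ => //; apply: subspaceD.
have mid_eq : (x - s n) + (x - s m) = 2%:R *: (x - mid).
  rewrite /mid scalerBr scalerA mulfV ?pnatr_eq0 // scale1r scaler_nat mulr2n.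
  by rewrite addrACA -opprD [s n + _]addrC.
have sum_ge : 4 * d ^+ 2 <= rnorm2 ((x - s n) + (x - s m)).
  rewrite mid_eq rnorm2Z normc_nat -sqr_rnorm.
  have : d ^+ 2 <= rnorm (x - mid) ^+ 2 by rewrite ler_sqr ?nnegrE ?rnorm_ge0 ?d_lb.
  by rewrite -[2%:R ^+ 2]/((2 : R) ^+ 2); lra.
have n_le : rnorm2 (x - s n) <= (d + rn) ^+ 2.
  by rewrite -sqr_rnorm ler_sqr ?nnegrE ?rnorm_ge0 ?addr_ge0 ?(ltW rn_gt0) // ltW.
have m_le : rnorm2 (x - s m) <= (d + rm) ^+ 2.
  by rewrite -sqr_rnorm ler_sqr ?nnegrE ?rnorm_ge0 ?addr_ge0 ?(ltW rm_gt0) // ltW.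
have rn2 : rn ^+ 2 <= rn by rewrite expr2 ger_pMl.
have rm2 : rm ^+ 2 <= rm by rewrite expr2 ger_pMl.
have := parallelogram (x - s n) (x - s m).
have -> : x - s n - (x - s m) = s m - s n by rewrite opprB addrC addrA subrK.
by move=> paral; rewrite -ltr_sqr ?nnegrE ?rnorm_ge0 ?(ltW e_gt0) // sqr_rnorm; nra.
Qed.

Hypothesis ip_complete : forall u, cauchy_seq u -> exists l, converges_to u l.

Lemma orthogonal_separation S x (eps : R) : is_subspace S -> 0 < eps ->
  (forall s, S s -> eps <= rnorm (x - s)) ->
  exists v, (forall s, S s -> ip s v = 0) /\ ip x v <> 0.
Proof.
move=> S_sub eps_gt0 far.
have [d [s [d_lb Ss s_near]]] := minimizing_seq x S_sub.1.
have d_gt0 : 0 < d.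
  suff : eps - d <= 0 by lra.
  apply: le0_of_vanishes (vanishes_invpow3 (R := R)) => n.
  by have := far _ (Ss n); have := s_near n; lra.
have [l sl] := ip_complete (minimizing_cauchy S_sub (ltW d_gt0) d_lb Ss s_near).
pose v := x - l.
have v_le_d : rnorm v <= d.
  suff : rnorm v - d <= 0 by lra.
  apply: le0_of_vanishes (vanishesD sl (vanishes_invpow3 (R := R))) => n /=.
  have := ler_rnormD (x - s n) (s n - l); rewrite addrA subrK -/v.
  by have := s_near n; lra.
have d_le t s' : S s' -> d <= rnorm (v - t *: s').
  move=> Ss'; suff : d - rnorm (v - t *: s') <= 0 by lra.
  apply: le0_of_vanishes sl => n /=.
  have := d_lb _ (subspaceD S_sub (Ss n) (subspaceZ S_sub t Ss')).
  have -> : x - (s n + t *: s') = (v - t *: s') + (l - s n).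
    by rewrite [RHS]addrACA subrK opprD [- s n + _]addrC.
  by have := ler_rnormD (v - t *: s') (l - s n); rewrite (rnorm_distC l); lra.
have v_orth s' : S s' -> ip s' v = 0.
  by move=> Ss'; apply: orthogonal_of_min_norm => t; exact: le_trans v_le_d (d_le t s' Ss').
exists v; split => //.
have l_orth : ip l v = 0 := ip_limit_eq0 sl (fun n => v_orth _ (Ss n)).
rewrite -[x](subrK l) (lfunD (ip_linl _)) l_orth addr0 ipxx => /complexI /eqP.
have := d_le 0 0 S_sub.1; rewrite scale0r subr0 => d_le_v.
by rewrite -sqr_rnorm expf_eq0 /= gt_eqF // (lt_le_trans d_gt0).
Qed.

Lemma geometric_tail (y : nat -> V) :
  (forall n, rnorm (y n.+1 - y n) <= invpow3 R n) ->
  forall n m, (n <= m)%N -> rnorm (y m - y n) <= 3 / 2 * invpow3 R n.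
Proof.
move=> y_step n m /subnKC <-; move: (m - n)%N => k.
suff : rnorm (y (n + k)%N - y n) <= 3 / 2 * invpow3 R n * (1 - invpow3 R k).
  by have := invpow3_gt0 R n; have := invpow3_gt0 R k; nra.
elim: k => [|k IH]; first by rewrite addn0 subrr rnorm0 /invpow3 expr0 subrr mulr0.
rewrite addnS; have := ler_rnormD (y (n + k)%N.+1 - y (n + k)%N) (y (n + k)%N - y n).
rewrite addrA subrK; have := y_step (n + k)%N; rewrite invpow3D invpow3S.
move: IH; move: (invpow3 R n) (invpow3 R k) => p q; nra.
Qed.

Lemma geometric_limit (y : nat -> V) :
  (forall n, rnorm (y n.+1 - y n) <= invpow3 R n) ->
  exists l, forall n, rnorm (l - y n) <= 3 / 2 * invpow3 R n.
Proof.
move=> /geometric_tail y_tail.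
have y_cauchy : cauchy_seq y.
  move=> e e_gt0; have [N NP] := vanishes_invpow3 (divr_gt0 e_gt0 (ltr0n R 2)).
  have tail_lt n m : (N <= n)%N -> (n <= m)%N -> rnorm (y m - y n) < e.
    by move=> /NP le_Nn /y_tail le_nm; apply: le_lt_trans le_nm _; lra.
  exists N => m n le_Nm le_Nn; have [le_nm|/ltnW le_mn] := leqP n m; first exact: tail_lt.
  by rewrite rnorm_distC; exact: tail_lt.
have [l yl] := ip_complete y_cauchy; exists l => n.
suff : rnorm (l - y n) - 3 / 2 * invpow3 R n <= 0 by lra.
apply: le0_of_vanishes (fun k => rnorm (y (n + k)%N - l)) _ _ => [k /=|e /yl[N NP]].
  have := ler_rnormD (l - y (n + k)%N) (y (n + k)%N - y n); rewrite addrA subrK.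
  by rewrite (rnorm_distC l (y (n + k)%N)); have := y_tail n (n + k)%N (leq_addr _ _); lra.
by exists N => k le_Nk; apply: NP; apply: leq_trans le_Nk (leq_addl _ _).
Qed.

Section BoundedFunctional.
Variable g : V -> R[i].
Hypothesis g_lin : forall a x y, g (a *: x + y) = a * g x + g y.

Lemma lfun_sign_shift x xi :
  exists2 s, rnorm s = rnorm xi & normc (g xi) <= normc (g (x + s)).
Proof.
have two_g : 2 * normc (g xi) <= normc (g (x + xi)) + normc (g (x - xi)).
  have diff : g (x + xi) - g (x - xi) = 2%:R * g xi.
    by rewrite (lfunD g_lin) (lfunB g_lin); ring.
  by have := le_normcD (g (x + xi)) (- g (x - xi)); rewrite diff normcN normcM normc_nat.
have [le_m|le_p] := lerP (normc (g (x - xi))) (normc (g (x + xi))).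
  by exists xi => //; lra.
by exists (- xi); rewrite ?rnormN //; lra.
Qed.

Lemma lfun_opnorm : (exists K, forall x, normc (g x) <= K * rnorm x) ->
  exists N, [/\ 0 <= N, forall x, normc (g x) <= N * rnorm x &
    forall x r, 0 < r -> exists2 xi, rnorm xi <= r & 2 / 3 * r * N <= normc (g (x + xi))].
Proof.
move=> [K gK]; pose E : set R := fun r => exists2 x, rnorm x <= 1 & r = normc (g x).
have E0 : E 0 by exists 0; rewrite ?rnorm0 ?(lfun0 g_lin) ?normc0.
have E_sup : has_sup E.
  split; first by exists 0.
  exists `|K| => _ [x x_le1 ->]; apply: le_trans (gK x) _.
  apply: le_trans (ler_wpM2r (rnorm_ge0 x) (ler_norm K)) _.
  by rewrite -[leRHS]mulr1 ler_wpM2l.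
have N_ge0 : 0 <= sup E := sup_upper_bound E_sup E0.
exists (sup E); split => // [x | x r r_gt0].
  have [->|x0] := eqVneq x 0; first by rewrite (lfun0 g_lin) rnorm0 normc0 mulr0.
  have x_gt0 := rnorm_gt0 x0.
  have : normc (g ((rnorm x)^-1%:C *: x)) <= sup E.
    apply: sup_upper_bound E_sup _ _; exists ((rnorm x)^-1%:C *: x) => //.
    by rewrite rnormZ normc_real ger0_norm ?invr_ge0 ?(ltW x_gt0) // mulVf ?gt_eqF.
  rewrite (lfunZ g_lin) normcM normc_real ger0_norm ?invr_ge0 ?(ltW x_gt0) //.
  by rewrite mulrC -ler_pdivlMr ?invr_gt0 // invrK.
move: N_ge0; rewrite le_eqVlt => /orP[/eqP N0|N_gt0].
  by exists 0; rewrite ?rnorm0 ?(ltW r_gt0) // -N0 mulr0 normc_ge0.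
have [_ [eta eta_le1 ->] lt_eta] := sup_adherent (divr_gt0 N_gt0 (ltr0n R 3)) E_sup.
have [s s_norm s_big] := lfun_sign_shift x (r%:C *: eta).
exists s.
  rewrite s_norm rnormZ normc_real ger0_norm ?(ltW r_gt0) //.
  by rewrite -[leRHS]mulr1 ler_wpM2l ?(ltW r_gt0).
apply: le_trans s_big; rewrite (lfunZ g_lin) normcM normc_real ger0_norm ?(ltW r_gt0) //.
by move: lt_eta; move: (sup E) (normc (g eta)) => a b; nra.
Qed.

End BoundedFunctional.

Section UniformBoundedness.
Variables (I : Type) (f : I -> V -> R[i]).
Hypothesis f_lin : forall i a x y, f i (a *: x + y) = a * f i x + f i y.
Hypothesis f_bounded : forall i, exists K, forall x, normc (f i x) <= K * rnorm x.
Hypothesis f_ptws_bounded : forall x, exists B, forall i, normc (f i x) <= B.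

Lemma uniform_boundedness : exists M, forall i x, normc (f i x) <= M * rnorm x.
Proof.
(* Sliding hump: [y n.+1] adds to [y n] a bump of size [3^-n] on which [f (idx n)] is
   large; the tail of the series is too small to undo it, so [f (idx n) l] grows like [n]. *)
apply: NNPP => no_M.
have [N NP] := boolp.choice (fun i => lfun_opnorm (f_lin i) (f_bounded i)).
have N_large c : exists i, c < N i.
  apply: NNPP => small; apply: no_M; exists c => i x; have [_ fN _] := NP i.
  apply: le_trans (fN x) (ler_wpM2r (rnorm_ge0 x) _).
  by rewrite leNgt; apply/negP => lt_c; apply: small; exists i.
have [idx idxP] := boolp.choice (fun n : nat => N_large (6 * 3 ^+ n * n%:R)).
have hump (p : I * V * nat) : exists xi, rnorm xi <= invpow3 R p.2 /\
    2 / 3 * invpow3 R p.2 * N p.1.1 <= normc (f p.1.1 (p.1.2 + xi)).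
  by case: p => [[i x] n]; have [_ _ /(_ x _ (invpow3_gt0 R n))[xi]] := NP i; exists xi.
have [bump bumpP] := boolp.choice hump.
pose y := fix y n := if n is k.+1 then y k + bump (idx k, y k, k) else 0.
have y_step n : rnorm (y n.+1 - y n) <= invpow3 R n /\
    2 / 3 * invpow3 R n * N (idx n) <= normc (f (idx n) (y n.+1)).
  by rewrite /= addrC addKr; exact: bumpP (idx n, y n, n).
have [l yl] := geometric_limit (fun n => (y_step n).1).
have [B lB] := f_ptws_bounded l.
pose n := Num.bound `|B|; pose i := idx n.
have B_lt_n : B < n%:R := le_lt_trans (ler_norm B) (archi_boundP (normr_ge0 B)).
have [N_ge0 fN _] := NP i.
have tail : normc (f i (y n.+1 - l)) <= N i * (invpow3 R n / 2).
  apply: le_trans (fN _) (ler_wpM2l N_ge0 _).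
  by rewrite rnorm_distC; apply: le_trans (yl n.+1) _; rewrite invpow3S; lra.
have := le_normcD (f i l) (f i (y n.+1 - l)).
rewrite -(lfunD (f_lin i)) [l + _]addrC subrK.
have Ni_large : invpow3 R n * (6 * 3 ^+ n * n%:R) < invpow3 R n * N i.
  by rewrite ltr_pM2l ?invpow3_gt0 ?idxP.
have six_n : invpow3 R n * (6 * 3 ^+ n * n%:R) = 6 * n%:R.
  have -> : invpow3 R n * (6 * 3 ^+ n * n%:R) = 6 * n%:R * (3 ^+ n * invpow3 R n) by ring.
  by rewrite mulr_invpow3 mulr1.
rewrite six_n in Ni_large.
have := (y_step n).2; have := lB i; rewrite -/i.
move: (normc (f i l)) (normc (f i (y n.+1))) (invpow3 R n * N i) => b a p.
lra.
Qed.

End UniformBoundedness.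

Lemma separately_bounded_form (b : V -> V -> R[i]) :
  (forall a x y p, b (a *: x + y) p = a * b x p + b y p) ->
  (forall p, exists K, forall x, normc (b x p) <= K * rnorm x) ->
  (forall x, exists B, forall p, normc (b x p) <= B * rnorm p) ->
  exists2 M, 0 < M & forall x p, normc (b x p) <= M * rnorm x * rnorm p.
Proof.
move=> b_lin b_left b_right.
pose f (p : {p : V | p != 0}) x := b x (val p) / (rnorm (val p))%:C.
have [|p|x|M fM] := uniform_boundedness (f := f).
- by move=> p a x y; rewrite /f b_lin mulrDl mulrA.
- have p_gt0 := rnorm_gt0 (valP p); have [K bK] := b_left (val p).
  exists (K / rnorm (val p)) => x; rewrite normc_divR // mulrAC ler_pM2r ?invr_gt0 //.
- have [B bB] := b_right x; exists B => p; have p_gt0 := rnorm_gt0 (valP p).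
  by rewrite normc_divR // ler_pdivrMr.
exists (`|M| + 1) => [|x p]; first by have := normr_ge0 M; lra.
have [->|p0] := eqVneq p 0.
  have [B /(_ 0)] := b_right x; rewrite !rnorm0 !mulr0 => b0.
  by apply: le_trans b0 _.
have p_gt0 := rnorm_gt0 p0; have := fM (exist _ p p0) x.
rewrite normc_divR // ler_pdivrMr // => /le_trans; apply.
rewrite ler_wpM2r ?rnorm_ge0 // ler_wpM2r ?rnorm_ge0 //.
by have := ler_norm M; lra.
Qed.

Section Symplectic.
Variable w : V -> V -> R[i].
Hypothesis w_lin : forall a x y z, w (a *: x + y) z = a * w x z + w y z.
Hypothesis w_skew : forall x y, w y x = - (w x y)^*.
Hypothesis w_bnd : exists M : R[i], 0 < M /\ forall x y, `|w x y| <= M * hnorm ip x * hnorm ip y.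
Hypothesis w_rep : forall f, cont_functional ip f -> exists x, forall y, f y = w y x.

Let w_linl z a x y : w (a *: x + y) z = a * w x z + w y z := w_lin a x y z.

Lemma w_bounded : exists2 M, 0 < M & forall x y, normc (w x y) <= M * rnorm x * rnorm y.
Proof.
have [M [M_gt0 wM]] := w_bnd; exists (complex.Re M) => [|x y]; first exact: Re_gt0.
by rewrite -lecR -normr_normc !rmorphM /= -!hnormE -(ger0_ReE (ltW M_gt0)).
Qed.

Lemma w0r x : w x 0 = 0.
Proof. by rewrite w_skew (lfun0 (w_linl x)) conjC0 oppr0. Qed.

Lemma w_eq0C x y : w x y = 0 -> w y x = 0.
Proof. by move=> xy0; rewrite w_skew xy0 conjC0 oppr0. Qed.

Lemma sperp_subspace W : is_subspace (sperp w W).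
Proof.
split=> [y _|a x y x_perp y_perp z Wz]; first exact: (lfun0 (w_linl y)).
by rewrite w_lin x_perp // y_perp // mulr0 addr0.
Qed.

Lemma ssum_subspace W : is_subspace W -> is_subspace (ssum W (sperp w W)).
Proof.
move=> [W0 W_lin]; have [P0 P_lin] := sperp_subspace W.
split=> [|a _ _ [x1 [x2 [Wx1 [Px2 ->]]]] [y1 [y2 [Wy1 [Py2 ->]]]]].
  by exists 0, 0; rewrite addr0.
exists (a *: x1 + y1), (a *: x2 + y2); split; first exact: W_lin.
split; first exact: P_lin.
by rewrite scalerDr addrACA.
Qed.

Lemma pos_def_sperp_eq0 W x : pos_def w W -> W x -> sperp w W x -> x = 0.
Proof. by move=> W_pos Wx x_perp; apply: NNPP => /(W_pos x Wx); rewrite x_perp // mulr0 ltxx. Qed.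

Lemma sriesz_exists v : exists u, forall z, ip z v = w z u.
Proof.
apply: w_rep; split=> [a x y|]; first exact: ip_lin.
exists (rnorm v + 1)%:C; split=> [|x]; first by rewrite ltcR; have := rnorm_ge0 v; lra.
rewrite normr_normc hnormE -rmorphM lecR; apply: le_trans (ip_cauchy_schwarz _ _) _.
by rewrite mulrC ler_wpM2r ?rnorm_ge0 //; lra.
Qed.

Definition sriesz v : V := projT1 (boolp.cid (sriesz_exists v)).

Lemma srieszP z v : ip z v = w z (sriesz v).
Proof. exact: (projT2 (boolp.cid (sriesz_exists v))). Qed.

Lemma sperp_sperp_closed W y : is_closed_subspace ip W -> sperp w (sperp w W) y -> W y.
Proof.
move=> W_closed y_perp; apply: NNPP => Wy.
have [eps eps_gt0 far] := closed_dist_gt0 W_closed Wy.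
have [v [v_orth yv]] := orthogonal_separation W_closed.1 eps_gt0 far.
apply: yv; rewrite srieszP; apply: y_perp => s Ws.
by apply: w_eq0C; rewrite -srieszP v_orth.
Qed.

Lemma ssum_sperp_dense W : is_closed_subspace ip W -> pos_def w W ->
  dense ip (ssum W (sperp w W)).
Proof.
move=> W_closed W_pos x e e_gt0; apply: NNPP => no_y.
have far s : ssum W (sperp w W) s -> complex.Re e <= rnorm (x - s).
  move=> Ss; rewrite leNgt; apply/negP => lt_s; apply: no_y; exists s; split => //.
  by rewrite hnormE (ger0_ReE (ltW e_gt0)) ltcR.
have [v [v_orth xv]] := orthogonal_separation (ssum_subspace W_closed.1) (Re_gt0 e_gt0) far.
have [W0 P0] := (W_closed.1.1, (sperp_subspace W).1).
have v_perp : sperp w W (sriesz v).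
  move=> s Ws; apply: w_eq0C; rewrite -srieszP v_orth //.
  by exists s, 0; rewrite addr0.
have v_W : W (sriesz v).
  apply: sperp_sperp_closed W_closed _ => z z_perp; apply: w_eq0C; rewrite -srieszP v_orth //.
  by exists 0, z; rewrite add0r.
by apply: xv; rewrite srieszP (pos_def_sperp_eq0 W_pos v_W v_perp) w0r.
Qed.

Lemma sriesz_bounded : exists2 M, 0 < M & forall p, rnorm (sriesz p) <= M * rnorm p.
Proof.
have [|p|x|M M_gt0 ipM] := separately_bounded_form (b := fun x p => ip x (sriesz p)).
- by move=> a x y p; exact: ip_lin.
- by exists (rnorm (sriesz p)) => x; rewrite mulrC; exact: ip_cauchy_schwarz.
- exists (rnorm (sriesz x)) => p.
  rewrite ip_sym srieszP w_skew -srieszP rmorphN /= conjCK normcN.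
  exact: ip_cauchy_schwarz.
exists M => // p; apply: ler_of_sqr_le_mul; rewrite ?rnorm_ge0 ?mulr_ge0 ?rnorm_ge0 ?(ltW M_gt0) //.
rewrite sqr_rnorm; apply: le_trans (Re_le_normc _) _; apply: le_trans (ipM _ _) _.
by rewrite [leRHS]mulrCA mulrA.
Qed.

Definition qform x y : R[i] := - 'i * w x y.

Lemma qform_lin a x y z : qform (a *: x + y) z = a * qform x z + qform y z.
Proof. by rewrite /qform w_lin; ring. Qed.

Lemma qform_herm x y : qform y x = (qform x y)^*.
Proof. by rewrite /qform w_skew rmorphM rmorphN /= conjCi; ring. Qed.

Lemma normc_qform x y : normc (qform x y) = normc (w x y).
Proof. by rewrite normcM normcN normc_i mul1r. Qed.

Lemma pos_def_qform_ge0 W u : pos_def w W -> W u -> 0 <= qform u u.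
Proof.
move=> W_pos Wu; have [->|u0] := eqVneq u 0; first by rewrite /qform (lfun0 (w_linl 0)) mulr0.
exact: ltW (W_pos u Wu (elimN eqP u0)).
Qed.

Section Decomposition.
Variable W : V -> Prop.
Hypothesis W_sub : is_subspace W.
Hypothesis W_pos : pos_def w W.
Hypothesis W_decomp : forall z, ssum W (sperp w W) z.

Lemma wproj_exists z : exists a, W a /\ sperp w W (z - a).
Proof. by have [a [b [Wa [b_perp ->]]]] := W_decomp z; exists a; rewrite [a + b]addrC addrK. Qed.

Definition wproj z : V := projT1 (boolp.cid (wproj_exists z)).

Lemma wprojW z : W (wproj z).
Proof. exact: (projT2 (boolp.cid (wproj_exists z))).1. Qed.

Lemma wproj_perp z : sperp w W (z - wproj z).
Proof. exact: (projT2 (boolp.cid (wproj_exists z))).2. Qed.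

Lemma wprojE x : W x -> wproj x = x.
Proof.
move=> Wx; apply/eqP; rewrite eq_sym -subr_eq0; apply/eqP.
exact: pos_def_sperp_eq0 W_pos (subspaceB W_sub Wx (wprojW x)) (wproj_perp x).
Qed.

Lemma w_wprojr u v : w u (wproj v) = w (wproj u) (wproj v).
Proof.
by rewrite -[u in LHS](subrK (wproj u)) (lfunD (w_linl _)) (wproj_perp u (wprojW v)) add0r.
Qed.

Lemma w_wprojC u v : w (wproj u) v = w u (wproj v).
Proof. by rewrite w_skew w_wprojr -w_skew -w_wprojr. Qed.

Lemma wproj_bounded : exists2 K, 0 < K & forall z, rnorm (wproj z) <= K * rnorm z.
Proof.
have [Mw Mw_gt0 wM] := w_bounded; have [CJ CJ_gt0 JC] := sriesz_bounded.
have [|q|z|M M_gt0 wPM] := separately_bounded_form (b := fun z q => w z (wproj q)).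
- by move=> a x y q; exact: w_lin.
- by exists (Mw * rnorm (wproj q)) => z; rewrite mulrAC; exact: wM.
- by exists (Mw * rnorm (wproj z)) => q; rewrite -w_wprojC; exact: wM.
exists (M * CJ) => [|z]; first exact: mulr_gt0.
apply: ler_of_sqr_le_mul; rewrite ?rnorm_ge0 ?mulr_ge0 ?rnorm_ge0 ?(ltW M_gt0) ?(ltW CJ_gt0) //.
rewrite sqr_rnorm /rnorm2 srieszP w_wprojC; apply: le_trans (Re_le_normc _) _.
apply: le_trans (wPM _ _) _.
rewrite [leRHS](_ : _ = M * rnorm z * (CJ * rnorm (wproj z))); last by ring.
by rewrite ler_wpM2l ?mulr_ge0 ?rnorm_ge0 ?(ltW M_gt0) ?JC.
Qed.

Lemma decomposition_coercive :
  exists2 c, 0 < c & forall x, W x -> c * rnorm2 x <= complex.Re (qform x x).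
Proof.
have [Mw Mw_gt0 wM] := w_bounded; have [CJ CJ_gt0 JC] := sriesz_bounded.
have [KP KP_gt0 PK] := wproj_bounded.
pose K := Mw * (KP * CJ) ^+ 2; have K_gt0 : 0 < K by rewrite !mulr_gt0 ?exprn_gt0 ?mulr_gt0.
exists K^-1 => [|x Wx]; first by rewrite invr_gt0.
have qxx_ge0 := Re_ge0 (pos_def_qform_ge0 W_pos Wx).
have [x_0|x0] := eqVneq x 0; first by move: qxx_ge0; rewrite x_0 -sqr_rnorm rnorm0 expr0n mulr0.
have x2_gt0 : 0 < rnorm2 x by rewrite -sqr_rnorm exprn_gt0 ?rnorm_gt0.
pose y := wproj (sriesz x); have Wy : W y := wprojW _.
have wxy : w x y = (rnorm2 x)%:C by rewrite /y -w_wprojC wprojE // -srieszP ipxx.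
have y0 : y != 0.
  apply/eqP => y0; move: wxy; rewrite y0 w0r -[0 : R[i]]/(0%:C) => /complexI x2_0.
  by move: x2_gt0; rewrite -x2_0 ltxx.
have y_small : rnorm y <= KP * CJ * rnorm x.
  by apply: le_trans (PK _) _; rewrite -mulrA ler_wpM2l ?JC ?(ltW KP_gt0).
have qyy : complex.Re (qform y y) <= K * rnorm2 x.
  apply: le_trans (Re_le_normc _) _; rewrite normc_qform; apply: le_trans (wM y y) _.
  rewrite -mulrA -expr2 -sqr_rnorm /K -mulrA -exprMn ler_wpM2l ?(ltW Mw_gt0) //.
  by rewrite ler_sqr ?nnegrE ?rnorm_ge0 ?mulr_ge0 ?(ltW KP_gt0) ?(ltW CJ_gt0) ?rnorm_ge0.
have := hermitian_cauchy_schwarz qform_lin qform_herm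
  (fun t => pos_def_qform_ge0 W_pos (subspaceB W_sub Wx (subspaceZ W_sub t Wy)))
  (Re_gt0 (W_pos Wy (elimN eqP y0))).
rewrite normc_qform wxy normc_real ger0_norm ?rnorm2_ge0 // => CS.
rewrite mulrC ler_pdivrMr // -(ler_pM2l x2_gt0) -expr2; apply: le_trans CS _.
rewrite [leRHS](_ : _ = complex.Re (qform x x) * (K * rnorm2 x)); last by ring.
exact: ler_wpM2l.
Qed.

End Decomposition.

Lemma ssum_sperp_proper W : max_pos_def ip w W -> ~ max_comp_pos_def ip w W ->
  exists x, ~ ssum W (sperp w W) x.
Proof.
move=> W_max W_not_comp; apply: NNPP => no_x; apply: W_not_comp; split => //.
have W_decomp z : ssum W (sperp w W) z by apply: NNPP => z_out; apply: no_x; exists z.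
have [[W_sub _] W_pos _] := W_max.
have [c c_gt0 cW] := decomposition_coercive W_sub W_pos W_decomp.
exists c%:C; split => [|x Wx]; first by rewrite ltcR.
rewrite hnormE -rmorphXn sqr_rnorm -/(qform x x).
by rewrite (ger0_ReE (pos_def_qform_ge0 W_pos Wx)) -rmorphM lecR cW.
Qed.

End Symplectic.
End InnerProduct.

Lemma hilbert_complete (R : realType) (V : lmodType R[i]) (ip : V -> V -> R[i]) :
  is_hilbert ip -> forall u, cauchy_seq ip u -> exists l, converges_to ip u l.
Proof.
move=> [_ _ ip_pos ip_cauchy _] u u_cauchy.
have [|l ul] := ip_cauchy u.
  move=> e e_gt0; have [N NP] := u_cauchy _ (Re_gt0 e_gt0).
  by exists N => m n le_Nm le_Nn; rewrite hnormE // (ger0_ReE (ltW e_gt0)) ltcR NP.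
exists l => e e_gt0; have [|N NP] := ul e%:C; first by rewrite ltcR.
by exists N => n /NP; rewrite hnormE // ltcR.
Qed.

Unset Implicit Arguments.

Theorem proposition2p13 (R : realType) (V : lmodType R[i])
    (ip w : V -> V -> R[i]) (W : V -> Prop) :
  is_hilbert ip -> strong_symplectic ip w -> signature_inf_inf ip w ->
  max_pos_def ip w W -> ~ max_comp_pos_def ip w W ->
  (forall x, W x -> sperp w W x -> x = 0) /\
  dense ip (ssum W (sperp w W)) /\
  exists x, ~ ssum W (sperp w W) x.
Proof.
move=> hilb [w_lin w_skew w_bnd _ w_rep] _ W_max W_not_comp.
have [ip_lin ip_sym ip_pos _ _] := hilb; have ip_complete := hilbert_complete hilb.
have [W_closed W_pos _] := W_max.
split; first by move=> x; exact: pos_def_sperp_eq0.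
split.
  exact: (ssum_sperp_dense ip_lin ip_sym ip_pos ip_complete w_lin w_skew w_rep W_closed W_pos).
exact: (ssum_sperp_proper ip_lin ip_sym ip_pos ip_complete w_lin w_skew w_bnd w_rep
  W_max W_not_comp).
Qed.
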